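(* Let $M$ be an $N\times N$ and $N_0$ an $r\times N$ complex matrix. If the series $\sum_{m=0}^\infty N_0M^m$ converges, then $N_0M^m=N_0\widetilde M^m$ for every $m\ge0$.
   Context: For a square complex matrix $M$ with Jordan decomposition $M=SJS^{-1}$, where $S$ is nonsingular and $J=\mathrm{diag}(J_{n_1}(\lambda_1),\dots,J_{n_k}(\lambda_k))$ with $J_{n_i}(\lambda_i)$ the $n_i\times n_i$ Jordan block for eigenvalue $\lambda_i$, define $\widetilde M=S\widetilde JS^{-1}$, where $\widetilde J=\mathrm{diag}(J^1,\dots,J^k)$ with $J^i=0_{n_i\times n_i}$ if $|\lambda_i|\ge1$ and $J^i=J_{n_i}(\lambda_i)$ otherwise. *)

(* Complex numbers are modelled by an arbitrary
   numClosedFieldType C. *)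
From HB Require Import structures.
From mathcomp Require Import all_boot all_order all_algebra.
Unset Printing Implicit Defensive.
Import Order.TTheory GRing.Theory Num.Theory.
Local Open Scope ring_scope.

Definition jordan_block (C : nzRingType) (n : nat) (lam : C) : 'M[C]_n :=
  \matrix_(i < n, j < n) (lam *+ (i == j :> nat) + (j == i.+1 :> nat)%:R).

Definition jordan_mx (C : nzRingType) (N k : nat) (n_ : 'I_k -> nat) (lam : 'I_k -> C)
    (eqN : (\sum_(i < k) n_ i)%N = N) : 'M[C]_N :=
  castmx (eqN, eqN) (mxdiag (fun i => @jordan_block C (n_ i) (lam i))).

Definition jordan_mx_tilde (C : numDomainType) (N k : nat) (n_ : 'I_k -> nat)
    (lam : 'I_k -> C) (eqN : (\sum_(i < k) n_ i)%N = N) : 'M[C]_N :=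
  castmx (eqN, eqN)
    (mxdiag (fun i => if 1 <= `|lam i| then 0 else @jordan_block C (n_ i) (lam i))).

(* Convergence of the matrix series sum_{m>=0} A m (entrywise, equivalently in norm). *)
Definition series_converges (C : numFieldType) (p q : nat) (A : nat -> 'M[C]_(p, q)) : Prop :=
  exists L : 'M[C]_(p, q), forall eps : C, 0 < eps ->
    exists K : nat, forall n : nat, (K <= n)%N ->
      forall (i : 'I_p) (j : 'I_q), `|(\sum_(m < n) A m - L) i j| < eps.

From HB Require Import structures.
From mathcomp Require Import all_boot all_order all_algebra.
From mathcomp Require Import ring.
Import Order.TTheory GRing.Theory Num.Theory.
Local Open Scope ring_scope.

(* Since the series sum_m N0 M^m converges, its terms tend to 0.
   Write M = S J S^-1; then N0 M^m S = (N0 S) J^m, and multiplying a sequence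
   tending to 0 by a fixed matrix keeps it tending to 0, so P J^m -> 0 with
   P := N0 S.  As J = diag(J_1, ..., J_k) is block diagonal, P J^m is the block
   row of the P_i J_i^m, where P_i are the column blocks of P, and each of them
   tends to 0.  The heart of the matter is the single Jordan block: if
   p J_n(lam)^m -> 0 and |lam| >= 1 then p = 0.  Indeed, on the first nonzero
   column j of a row of p, the entry of p J_n(lam)^m is lam^m p_j, whose
   modulus never decreases.  Hence P_i = 0 whenever |lam_i| >= 1, so
   P_i J_i^m = P_i Jtilde_i^m for every block, i.e. P J^m = P Jtilde^m, and
   conjugating back by S gives N0 M^m = N0 Mtilde^m. *)

Definition vanishes (C : numFieldType) (p q : nat) (A : nat -> 'M[C]_(p, q)) : Prop :=
  forall eps : C, 0 < eps -> exists K : nat, forall n : nat, (K <= n)%N ->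
      forall (i : 'I_p) (j : 'I_q), `|A n i j| < eps.
Arguments vanishes {C p q}.

Section Vanishing.
Context {C : numFieldType}.

Lemma vanishes_ext {p q : nat} {A B : nat -> 'M[C]_(p, q)} :
  (forall m, A m = B m) -> vanishes A -> vanishes B.
Proof.
move=> eqAB vA eps eps0; have [K HK] := vA eps eps0.
by exists K => n Kn i j; rewrite -eqAB; apply: HK.
Qed.

(* The terms of a convergent series tend to 0: they are differences of two
   consecutive partial sums, both close to the limit. *)
Lemma series_converges_vanishes {p q : nat} {A : nat -> 'M[C]_(p, q)} :
  @series_converges C p q A -> vanishes A.
Proof.
move=> [L HL] eps eps0.
have [K HK] := HL (eps / 2) (divr_gt0 eps0 (ltr0Sn _ 1)).
exists K => n Kn i j.
have -> : A n i j = (\sum_(m < n.+1) A m - L) i j - (\sum_(m < n) A m - L) i j.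
  by rewrite big_ord_recr /= !mxE; ring.
apply: le_lt_trans (ler_normB _ _) _.
by rewrite [eps]splitr; apply: ltrD; apply: HK => //; apply: leqW.
Qed.

(* Right multiplication by a fixed matrix S preserves vanishing: each entry of
   A m *m S is at most the largest entry of A m times a column sum of |S|,
   and all these column sums are below B. *)
Lemma vanishes_mulmxr {p q s : nat} {A : nat -> 'M[C]_(p, q)} (S : 'M[C]_(q, s)) :
  vanishes A -> vanishes (fun m => A m *m S).
Proof.
move=> vA eps eps0.
pose B := 1 + \sum_j \sum_k `|S k j|.
have colS_lt_B j : \sum_k `|S k j| < B.
  rewrite /B (bigD1 j) //= addrCA ltrDl ltr_pwDl ?ltr01 //.
  by rewrite sumr_ge0 // => j' _; rewrite sumr_ge0.
have B0 : 0 < B.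
  by rewrite ltr_pwDl ?ltr01 // sumr_ge0 // => j _; rewrite sumr_ge0.
have [K HK] := vA (eps / B) (divr_gt0 eps0 B0).
exists K => n Kn i j; rewrite mxE.
apply: le_lt_trans (ler_norm_sum _ _ _) _.
apply: (@le_lt_trans _ _ (\sum_k eps / B * `|S k j|)).
  by apply: ler_sum => k _; rewrite normrM ler_wpM2r //; apply/ltW/HK.
rewrite -mulr_sumr -[ltRHS](divfK (lt0r_neq0 B0)).
by rewrite ltr_pM2l ?divr_gt0.
Qed.

Lemma vanishes_mxrow {k r : nat} {n_ : 'I_k -> nat}
    (Q : nat -> forall i, 'M[C]_(r, n_ i)) (i : 'I_k) :
  vanishes (fun m => mxrow (Q m)) -> vanishes (fun m => Q m i).
Proof.
move=> vQ eps eps0; have [K HK] := vQ eps eps0.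
exists K => n Kn a t.
by rewrite -[Q n i](mxrowK (Q n)) mxE; apply: HK.
Qed.

End Vanishing.

Section JordanBlock.
Context {C : numFieldType} {n : nat} {lam : C}.
Local Notation J := (@jordan_block C n lam).

(* J is upper bidiagonal, so column j of X J only involves columns j-1 and j
   of X; if the entries of row a of X left of column j vanish, the entry at
   column j is simply scaled by lam. *)
Lemma mul_jordan_block_lead (r : nat) (X : 'M[C]_(r, n)) (a : 'I_r) (j : 'I_n) :
  (forall k : 'I_n, (k < j)%N -> X a k = 0) -> (X *m J) a j = X a j * lam.
Proof.
move=> X0; rewrite mxE (bigD1 j) //= big1 ?addr0.
  by rewrite !mxE eqxx (ltn_eqF (ltnSn j)) addr0.
move=> k; rewrite -val_eqE => /negPf kj.
case: (ltnP k j) => [/X0->|jk]; first by rewrite mul0r.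
by rewrite !mxE kj (ltn_eqF (leq_ltn_trans jk (ltnSn k))) addr0 mulr0.
Qed.

Lemma jordan_block_pow_lead (r : nat) (p : 'M[C]_(r, n)) (a : 'I_r) (m : nat) :
  forall j : 'I_n, (forall k : 'I_n, (k < j)%N -> p a k = 0) ->
  (p *m J ^+ m) a j = lam ^+ m * p a j.
Proof.
elim: m => [|m IHm] j p0; first by rewrite expr0 mulmx1 mul1r.
rewrite exprSr -mulmxE mulmxA mul_jordan_block_lead; last first.
  move=> k kj; rewrite IHm ?p0 ?mulr0 // => l lk.
  by apply: p0; apply: ltn_trans kj.
by rewrite IHm // exprSr mulrAC.
Qed.

(* The key fact: if |lam| >= 1 and p J^m -> 0 then p = 0.  Otherwise, at the
   first nonzero entry p a j of some row, |(p J^m) a j| = |lam|^m |p a j|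
   stays at least |p a j| > 0. *)
Lemma jordan_block_vanishes {r : nat} {p : 'M[C]_(r, n)} :
  1 <= `|lam| -> vanishes (fun m => p *m J ^+ m) -> p = 0.
Proof.
move=> lam_ge1 vp; apply/matrixP => a j; rewrite mxE.
suff p0 i : forall k : 'I_n, (k < i)%N -> p a k = 0 by apply: (p0 j.+1).
elim: i => [|i IHi] k //; rewrite ltnS leq_eqVlt => /orP[/eqP ki|]; last exact: IHi.
have left0 (l : 'I_n) : (l < k)%N -> p a l = 0 by rewrite ki; apply: IHi.
apply/eqP; apply: contraT => pak_neq0.
have [K HK] := vp `|p a k| (ltac:(by rewrite normr_gt0)).
have := HK K (leqnn K) a k.
rewrite jordan_block_pow_lead // normrM normrX => small.
have big : `|p a k| <= `|lam| ^+ K * `|p a k| by rewrite ler_peMl ?exprn_ege1.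
by have := le_lt_trans big small; rewrite ltxx.
Qed.

End JordanBlock.

Lemma mul_mxdiag_pow (C : comNzRingType) (k r : nat) (n_ : 'I_k -> nat)
    (P : 'M[C]_(r, \sum_i n_ i)) (D : forall i, 'M[C]_(n_ i)) (m : nat) :
  P *m mxdiag D ^+ m = mxrow (fun i => submxrow P i *m D i ^+ m).
Proof.
elim: m => [|m IHm].
  by rewrite expr0 mulmx1 -{1}(submxrowK P); apply: eq_mxrow => i; rewrite expr0 mulmx1.
rewrite exprSr -mulmxE mulmxA IHm mul_mxrow_mxdiag; apply: eq_mxrow => i.
by rewrite exprSr -mulmxE mulmxA.
Qed.

Lemma conjmx_pow (C : comUnitRingType) (n : nat) (S A : 'M[C]_n) (m : nat) :
  S \in unitmx -> (S *m A *m invmx S) ^+ m = S *m A ^+ m *m invmx S.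
Proof.
move=> S_unit; elim: m => [|m IHm]; first by rewrite !expr0 mulmx1 mulmxV.
by rewrite !exprSr -!mulmxE IHm !mulmxA mulmxKV.
Qed.

(* The theorem in Jordan coordinates: if P J^m -> 0 for a Jordan matrix
   J = diag(J_i), then P J^m = P Jtilde^m, because the column blocks of P
   facing the blocks with |lam_i| >= 1 are zero. *)
Lemma jordan_vanishes_tilde (C : numFieldType) (r k : nat) (n_ : 'I_k -> nat)
    (lam : 'I_k -> C) (P : 'M[C]_(r, \sum_i n_ i)) :
  vanishes (fun m => P *m mxdiag (fun i => @jordan_block C (n_ i) (lam i)) ^+ m) ->
  forall m, P *m mxdiag (fun i => @jordan_block C (n_ i) (lam i)) ^+ m =
    P *m mxdiag (fun i => if 1 <= `|lam i| then 0 else @jordan_block C (n_ i) (lam i)) ^+ m.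
Proof.
move=> vP m; rewrite !mul_mxdiag_pow; apply: eq_mxrow => i.
case: ifP => // lam_ge1.
have vPi : vanishes (fun m => submxrow P i *m @jordan_block C (n_ i) (lam i) ^+ m).
  apply: (vanishes_mxrow (fun m j => submxrow P j *m @jordan_block C (n_ j) (lam j) ^+ m)).
  by apply: vanishes_ext vP => m'; rewrite mul_mxdiag_pow.
by rewrite (jordan_block_vanishes lam_ge1 vPi) !mul0mx.
Qed.

Theorem lemmaA1 (C : numClosedFieldType) (r N : nat) (M : 'M[C]_N) (N0 : 'M[C]_(r, N))
  (k : nat) (n_ : 'I_k -> nat) (lam : 'I_k -> C) (eqN : (\sum_(i < k) n_ i)%N = N)
  (S : 'M[C]_N) :
  S \in unitmx ->
  M = S *m @jordan_mx C N k n_ lam eqN *m invmx S ->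
  @series_converges C r N (fun m => N0 *m M ^+ m) ->
  forall m : nat,
    N0 *m M ^+ m = N0 *m (S *m @jordan_mx_tilde C N k n_ lam eqN *m invmx S) ^+ m.
Proof.
move=> S_unit {M}-> conv m; move: S N0 S_unit conv; case: N / eqN => S N0 S_unit conv.
(* With N replaced by \sum_i n_i, the casts in the Jordan matrices disappear. *)
rewrite /jordan_mx /jordan_mx_tilde !castmx_id in conv *.
(* N0 M^m = (N0 S) J^m S^-1, and (N0 S) J^m = (N0 M^m) S -> 0. *)
rewrite !conjmx_pow // !mulmxA; congr (_ *m _); apply: jordan_vanishes_tilde.
have := vanishes_mulmxr S (series_converges_vanishes conv).
apply: vanishes_ext => m'.
by rewrite conjmx_pow // !mulmxA mulmxKV.
Qed.
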